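(* Fix $\alpha,\beta\in(0,1)$ and consider the decoupled process with parameters $(G,r,T,\alpha,\beta)$. For $t\in\mathbb{N}$ let $u,v$ be chosen uniformly and independently from $B_{t,G}(r)$, independently of the process, and let $p_t=\Pr[\mathrm{origin}_t(u)=\mathrm{origin}_t(v)]$ (probability over both the process and the choice of $u,v$). Let $\lambda(t)=\dfrac{|\{x:g_t(x)=+1\}|-|\{x:g_t(x)=-1\}|}{|B_{t,G}(r)|}$. If $p_t\to0$ as $t\to\infty$, then for every $\eta>0$ there is $t_0$ such that $\Pr[|\lambda(t)-\mathbb{E}\lambda(t)|>\eta]<\eta$ for all $t\ge t_0$. Moreover, if $p_t\le e^{-c_1t^{c_2}}$ for constants $c_1,c_2>0$, then there are constants $c_3,c_4,c_5,c_6>0$ with $\Pr[|\lambda(t)-\mathbb{E}\lambda(t)|>e^{-c_3t^{c_4}}]\le e^{-c_5t^{c_6}}$ for all sufficiently large $t$.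
   Context: Decoupled process. Fix $\alpha,\beta\in[0,1]$, a connected locally finite undirected graph $G$, root $r$, and a BFS spanning tree $T$ of $G$ rooted at $r$, oriented away from $r$, with parent map $p$. Let $Z_0=+1$, $Z_1,Z_2,\dots$ i.i.d. uniform on $\{-1,+1\}$, $Z_\infty=\bot$. Counter $\mathrm{count}_0=1$; $\mathrm{origin}_0(r)=0$ (and always $0$), $\mathrm{origin}_0(v)=\infty$ for $v\ne r$; $g_t(v)=Z_{\mathrm{origin}_t(v)}$. Update from $t$ to $t+1$ (independent choices): if $g_t(v)=g_t(p(v))=\bot$ then $\mathrm{origin}_{t+1}(v)=\infty$; nodes with $g_t(v)=\bot\ne g_t(p(v))$ are processed sequentially in a fixed order: w.p. $1-\alpha$, $\mathrm{origin}_{t+1}(v)=\mathrm{origin}_t(p(v))$; w.p. $\alpha$, $\mathrm{origin}_{t+1}(v)$ is the current counter value and the counter is then incremented; if $g_t(v)\ne\bot$, $v\ne r$: w.p. $\beta$, $\mathrm{origin}_{t+1}(v)=\mathrm{origin}_t(p(v))$, otherwise unchanged. $B_{t,G}(r)=\{x:d_G(r,x)\le t\}$; this is exactly the set of nodes with $g_t(x)\ne\bot$. *)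

From HB Require Import structures.
From mathcomp Require Import all_boot all_order all_algebra.
From mathcomp Require Import all_classical all_reals all_analysis.

Set Implicit Arguments.
Unset Strict Implicit.
Unset Printing Implicit Defensive.

Import Order.TTheory GRing.Theory Num.Theory.
Local Open Scope ring_scope.

Definition distr (R : Type) (A : Type) := seq (R * A).

Section Distr.
Variable R : realType.

Definition dret (A : Type) (a : A) : distr R A := [:: (1, a)].

Definition dbind (A B : Type) (d : distr R A) (f : A -> distr R B) : distr R B :=
  flatten [seq [seq (x.1 * y.1, y.2) | y <- f x.2] | x <- d].

Definition Prob (A : Type) (d : distr R A) (P : A -> bool) : R :=
  \sum_(x <- d) (if P x.2 then x.1 else 0).

Definition Expect (A : Type) (d : distr R A) (f : A -> R) : R :=
  \sum_(x <- d) x.1 * f x.2.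

Fixpoint dfold (A B : Type) (f : B -> A -> distr R A) (l : seq B) (s : A)
  : distr R A :=
  match l with
  | [::] => dret s
  | v :: l' => dbind (f v s) (dfold f l')
  end.
End Distr.

Section Graph.
Variables (V : eqType) (nb : V -> seq V) (r : V).

(* gball t = B_{t,G}(r) = { x | d_G(r,x) <= t }, enumerated without repetition *)
Fixpoint gball (t : nat) : seq V :=
  if t is t'.+1 then undup (gball t' ++ flatten [seq nb x | x <- gball t'])
  else [:: r].

(* p is the parent map of a BFS spanning tree rooted at r:
   every v <> r is adjacent to p v, and d(r, p v) = d(r, v) - 1. *)
Definition is_bfs_parent (p : V -> V) : Prop :=
  forall v, v != r ->
    p v \in nb v /\ (forall t, v \in gball t.+1 -> p v \in gball t).
End Graph.

(* State: origin : V -> option nat (None = infinity), and the list zs of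
   the signs Z_0, ..., Z_{count-1} drawn so far (true = +1, false = -1);
   count = size zs.  The i.i.d. signs Z_i are drawn lazily, at the moment
   the counter value i is first used. *)
Record pstate (V : Type) := PState { origin : V -> option nat; zs : seq bool }.

Section Process.
Variables (R : realType) (V : eqType) (nb : V -> seq V) (r : V) (p : V -> V)
          (alpha beta : R).

(* g_t(v) = Z_{origin_t(v)}, with Z_infinity = bot (None). *)
Definition gval (s : pstate V) (v : V) : option bool :=
  match origin s v with
  | Some i => Some (nth true (zs s) i)
  | None => None
  end.

Definition upd (f : V -> option nat) (v : V) (x : option nat) : V -> option nat :=
  fun w => if w == v then x else f w.

(* a node v with g_t(v) = bot <> g_t(p v); o = origin_t (old values) *)
Definition step_frontier (o : V -> option nat) (v : V) (s : pstate V)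
  : distr R (pstate V) :=
  [:: (1 - alpha, PState (upd (origin s) v (o (p v))) (zs s));
      (alpha / 2, PState (upd (origin s) v (Some (size (zs s)))) (rcons (zs s) true));
      (alpha / 2, PState (upd (origin s) v (Some (size (zs s)))) (rcons (zs s) false))].

(* a node v <> r with g_t(v) <> bot *)
Definition step_inner (o : V -> option nat) (v : V) (s : pstate V)
  : distr R (pstate V) :=
  [:: (beta, PState (upd (origin s) v (o (p v))) (zs s)); (1 - beta, s)].

(* one step from time t to t+1; nodes with g_t(v) = g_t(p v) = bot keep
   origin = infinity.  Candidate nodes are enumerated through the balls
   (all nodes with g_t <> bot lie in B_t, and the frontier lies in B_{t+1}). *)
Definition pstep (t : nat) (s : pstate V) : distr R (pstate V) :=
  let o := origin s in
  let frontier := [seq v <- gball nb r t.+1 |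
                    (gval s v == None) && (gval s (p v) != None)] in
  let inner := [seq v <- gball nb r t | (gval s v != None) && (v != r)] in
  dbind (dfold (step_frontier o) frontier s) (dfold (step_inner o) inner).

Definition pinit : pstate V :=
  PState (fun v => if v == r then Some 0%N else None) [:: true].

Fixpoint proc (t : nat) : distr R (pstate V) :=
  if t is t'.+1 then dbind (proc t') (pstep t') else dret R pinit.

Definition lambda_of (t : nat) (s : pstate V) : R :=
  ((count (fun x => gval s x == Some true) (gball nb r t))%:R
   - (count (fun x => gval s x == Some false) (gball nb r t))%:R)
  / (size (gball nb r t))%:R.

Definition coinc_of (t : nat) (s : pstate V) : R :=
  (count (fun uv : V * V => origin s uv.1 == origin s uv.2)
     [seq (u, v) | u <- gball nb r t, v <- gball nb r t])%:R
  / ((size (gball nb r t))%:R ^+ 2).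

Definition p_coinc (t : nat) : R := Expect (proc t) (coinc_of t).

Definition Elambda (t : nat) : R := Expect (proc t) (lambda_of t).

Definition dev_prob (t : nat) (eta : R) : R :=
  Prob (proc t) (fun s => eta < `|lambda_of t s - Elambda t|).
End Process.

From HB Require Import structures.
From mathcomp Require Import all_boot all_order all_algebra.
From mathcomp Require Import all_classical all_reals all_analysis.
From mathcomp Require Import ring lra zify.
Set Implicit Arguments.
Unset Strict Implicit.
Unset Printing Implicit Defensive.
Import Order.TTheory GRing.Theory Num.Theory.
Local Open Scope classical_set_scope.
Local Open Scope ring_scope.

(* Write h(x) in {-1, 0, 1} for g_t(x), so that lambda(t) is the average of h over B_t and
   Var lambda(t) <= E lambda(t)^2 = |B_t|^-2 sum_(u, v) E[h(u) h(v)].  Every sign Z_j with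
   j > 0 is a fair coin that the dynamics only copies around, so flipping it preserves the
   law of the process.  When origin_t(u) <> origin_t(v), flipping the larger of the two
   origins negates h(u) h(v); hence E[h(u) h(v)] <= Pr[origin_t(u) = origin_t(v)], so
   Var lambda(t) <= p_t, and Chebyshev's inequality gives
   Pr[|lambda(t) - E lambda(t)| > eta] <= p_t / eta^2, which yields both claims. *)

Section Distributions.
Variable R : realType.
Implicit Types A B : Type.

Lemma Expect_nil A (f : A -> R) : Expect [::] f = 0.
Proof. by rewrite /Expect big_nil. Qed.

Lemma Expect_cons A (x : R * A) (d : distr R A) f :
  Expect (x :: d) f = x.1 * f x.2 + Expect d f.
Proof. by rewrite /Expect big_cons. Qed.

Lemma Expect_dret A (a : A) f : Expect (dret R a) f = f a.
Proof. by rewrite Expect_cons Expect_nil mul1r addr0. Qed.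

Lemma Expect_dbind A B (d : distr R A) (g : A -> distr R B) f :
  Expect (dbind d g) f = Expect d (fun a => Expect (g a) f).
Proof.
elim: d => [|x d IH]; first by rewrite /dbind /= !Expect_nil.
rewrite Expect_cons -IH /dbind map_cons /= /Expect big_cat big_map /= mulr_sumr.
by congr (_ + _); apply: eq_bigr => y _; rewrite mulrA.
Qed.

Lemma Expect_ext A (d : distr R A) f g :
  (forall x, List.In x d -> f x.2 = g x.2) -> Expect d f = Expect d g.
Proof.
elim: d => [|x d IH] fg; first by rewrite !Expect_nil.
by rewrite !Expect_cons fg /=; [rewrite IH // => y dy; apply: fg; right | left].
Qed.

Lemma ExpectZl A (d : distr R A) c f :
  Expect d (fun a => c * f a) = c * Expect d f.
Proof. by rewrite /Expect mulr_sumr; apply: eq_bigr => x _; rewrite mulrCA. Qed.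

Lemma Expect_sum A (d : distr R A) I (l : seq I) (F : I -> A -> R) :
  Expect d (fun a => \sum_(i <- l) F i a) = \sum_(i <- l) Expect d (F i).
Proof.
by rewrite /Expect; under eq_bigr do rewrite mulr_sumr; exact: exchange_big.
Qed.

Lemma Prob_Expect A (d : distr R A) (P : A -> bool) :
  Prob d P = Expect d (fun a => (P a)%:R).
Proof. by apply: eq_bigr => x _; case: (P x.2); rewrite ?mulr1 ?mulr0. Qed.

Lemma Expect_partition A (d : distr R A) (key : A -> nat) f :
  exists M, Expect d f = \sum_(j < M) Expect d (fun a => f a * (key a == j)%:R).
Proof.
exists (\max_(x <- d) (key x.2).+1)%N; rewrite -Expect_sum; apply: Expect_ext.
move=> x dx; rewrite -mulr_sumr.
have key_lt : (key x.2 < \max_(y <- d) (key y.2).+1)%N.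
  elim: d dx {f} => [|y d IH] //= [<-|dx]; rewrite big_cons ?leq_maxl //.
  exact: leq_trans (IH dx) (leq_maxr _ _).
rewrite (bigD1 (Ordinal key_lt)) //= eqxx big1 ?addr0 ?mulr1 // => j nj.
by case: eqP => // kj; case/eqP: nj; apply: val_inj.
Qed.

Lemma Expect_odd A (d : distr R A) (F : A -> A) f :
  Expect d (f \o F) = Expect d f -> (forall x, List.In x d -> f (F x.2) = - f x.2) ->
  Expect d f = 0.
Proof.
move=> invF oddf; suff: Expect d f = - Expect d f by lra.
by rewrite -{1}invF -mulN1r -ExpectZl; apply: Expect_ext => x /oddf /= ->; ring.
Qed.

Definition dsupported A (P : A -> Prop) (d : distr R A) :=
  forall x, List.In x d -> 0 <= x.1 /\ P x.2.

Lemma dsupported_dret A (P : A -> Prop) a : P a -> dsupported P (dret R a).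
Proof. by move=> Pa x [<-|[]]. Qed.

Lemma dsupported_dbind A B (P : A -> Prop) (Q : B -> Prop) d (g : A -> distr R B) :
  dsupported P d -> (forall a, P a -> dsupported Q (g a)) -> dsupported Q (dbind d g).
Proof.
elim: d => [|x d IH] Pd Qg; first by move=> y [].
rewrite /dbind map_cons /= => y /List.in_app_iff [/List.in_map_iff [z [<- gz]]|dy].
  have [x1_ge0 Px] := Pd x (or_introl erefl).
  by have [z1_ge0 Qz] := Qg _ Px z gz; split => //; apply: mulr_ge0.
by apply: IH dy => // z dz; apply: Pd; right.
Qed.

Lemma dsupported_dfold A B (k : B -> A -> distr R A) (P : A -> Prop) l s :
  (forall v a, P a -> dsupported P (k v a)) -> P s -> dsupported P (dfold k l s).
Proof.
move=> Pk; elim: l s => [|v l IH] s Ps /=; first exact: dsupported_dret.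
exact: dsupported_dbind (Pk v s Ps) IH.
Qed.

Lemma ler_Expect A (P : A -> Prop) (d : distr R A) f g :
  dsupported P d -> (forall a, P a -> f a <= g a) -> Expect d f <= Expect d g.
Proof.
move=> Pd fg; rewrite /Expect; elim: d Pd => [|x d IH] Pd; first by rewrite !big_nil.
have [x1_ge0 Px] := Pd x (or_introl erefl).
rewrite !big_cons lerD ?ler_wpM2l ?fg // IH // => y dy.
by apply: Pd; right.
Qed.

Lemma Expect_dfold_mass1 A B (k : B -> A -> distr R A) l s :
  (forall v a, Expect (k v a) (fun _ => 1) = 1) -> Expect (dfold k l s) (fun _ => 1) = 1.
Proof.
move=> k1; elim: l s => [|v l IH] s /=; first by rewrite Expect_dret.
by rewrite Expect_dbind (Expect_ext (g := fun _ => 1)) ?k1 // => x _; rewrite IH.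
Qed.

Lemma Expect_dfold_comm A B (F : A -> A) (k : B -> A -> distr R A) l s f :
  (forall v a f, Expect (k v (F a)) f = Expect (k v a) (f \o F)) ->
  Expect (dfold k l (F s)) f = Expect (dfold k l s) (f \o F).
Proof.
move=> kF; elim: l s f => [|v l IH] s f /=; first by rewrite !Expect_dret.
by rewrite !Expect_dbind kF; apply: Expect_ext => x _ /=; rewrite IH.
Qed.

Lemma chebyshev_Prob A (P : A -> Prop) (d : distr R A) f eta :
  dsupported P d -> Expect d (fun _ => 1) = 1 -> 0 < eta ->
  Prob d (fun a => eta < `|f a - Expect d f|) <= Expect d (fun a => f a ^+ 2) / eta ^+ 2.
Proof.
move=> Pd d1 eta_gt0; set m := Expect d f.
have eta2_gt0 : 0 < eta ^+ 2 by rewrite exprn_gt0.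
have var_le : Expect d (fun a => (f a - m) ^+ 2) <= Expect d (fun a => f a ^+ 2).
  have expand c : Expect d (fun a => (f a - c) ^+ 2) =
      Expect d (fun a => f a ^+ 2) - 2 * c * Expect d f + c ^+ 2 * Expect d (fun _ => 1).
    elim: (d) => [|x d' IH]; rewrite ?Expect_nil ?Expect_cons ?IH; ring.
  by rewrite expand d1 -/m; have := sqr_ge0 m; lra.
rewrite Prob_Expect ler_pdivlMr // mulrC -ExpectZl.
apply: le_trans var_le; apply: (ler_Expect Pd) => a _.
case: ltP => [dev|_]; last by rewrite mulr0 sqr_ge0.
rewrite mulr1 -[(f a - m) ^+ 2]real_normK ?num_real //.
by have := ltW eta_gt0; nra.
Qed.

End Distributions.

Lemma natr_count (R : pzSemiRingType) (A : Type) (P : pred A) (l : seq A) :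
  (count P l)%:R = \sum_(x <- l) (P x)%:R :> R.
Proof. by rewrite -sum1_count natr_sum big_mkcond; apply: eq_bigr => x _; case: (P x). Qed.

Definition flipz (j : nat) (z : seq bool) : seq bool :=
  mkseq (fun i => if i == j then ~~ nth true z i else nth true z i) (size z).

Lemma size_flipz j z : size (flipz j z) = size z.
Proof. exact: size_mkseq. Qed.

Lemma nth_flipz j z i : nth true (flipz j z) i =
  if (i == j) && (i < size z)%N then ~~ nth true z i else nth true z i.
Proof.
rewrite /flipz; case: (ltnP i (size z)) => iz; first by rewrite nth_mkseq // andbT.
by rewrite !nth_default ?size_mkseq // andbF.
Qed.

Lemma flipz_id j z : (size z <= j)%N -> flipz j z = z.
Proof.
move=> zj; apply: (@eq_from_nth _ true); rewrite ?size_flipz // => i iz.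
by rewrite nth_flipz; case: eqP => //= ->; rewrite ltnNge zj.
Qed.

Lemma flipz_rcons j z b : flipz j (rcons z b) =
  if (j < size z)%N then rcons (flipz j z) b
  else if j == size z then rcons z (~~ b) else rcons z b.
Proof.
case: ltngtP => jz; [|by rewrite flipz_id // size_rcons|].
all: apply: (@eq_from_nth _ true); rewrite ?size_flipz ?size_rcons ?size_flipz // => i iz.
all: rewrite nth_flipz !nth_rcons ?size_flipz ?nth_flipz size_rcons ?jz.
all: by case: (ltngtP i (size z)) => iz'; case: (eqVneq i j) => ij; subst;
       rewrite ?iz ?iz' ?ltnn ?eqxx //=; lia.
Qed.

Section Process.
Variables (R : realType) (V : eqType) (nb : V -> seq V) (r : V) (p : V -> V)
          (alpha beta : R).

Local Notation proc := (proc nb r p alpha beta).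
Local Notation pstep := (pstep nb r p alpha beta).

Definition flip (j : nat) (s : pstate V) := PState (origin s) (flipz j (zs s)).

Lemma gval_flip_None j s v : (gval (flip j s) v == None) = (gval s v == None).
Proof. by rewrite /gval /=; case: (origin s v). Qed.

(* Flipping the sign drawn at a frontier node only swaps the two branches of weight alpha/2. *)
Lemma step_frontier_flip j o v s f :
  Expect (step_frontier p alpha o v (flip j s)) f =
  Expect (step_frontier p alpha o v s) (f \o flip j).
Proof.
rewrite /step_frontier !Expect_cons !Expect_nil /flip /= size_flipz !flipz_rcons.
case: ltngtP => jz //; first by rewrite !flipz_id // ltnW.
by rewrite !flipz_id ?jz //=; ring.
Qed.

Lemma step_inner_flip j o v s f :
  Expect (step_inner p beta o v (flip j s)) f =
  Expect (step_inner p beta o v s) (f \o flip j).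
Proof. by rewrite /step_inner !Expect_cons !Expect_nil. Qed.

Lemma pstep_flip j t s f :
  Expect (pstep t (flip j s)) f = Expect (pstep t s) (f \o flip j).
Proof.
rewrite /pstep; under eq_filter do rewrite !gval_flip_None.
under [X in dbind _ (dfold _ X)]eq_filter do rewrite !gval_flip_None.
rewrite !Expect_dbind (Expect_dfold_comm (F := flip j)); last exact: step_frontier_flip.
by apply: Expect_ext => x _; apply: Expect_dfold_comm; exact: step_inner_flip.
Qed.

Lemma Expect_proc_flip j t f : (0 < j)%N ->
  Expect (proc t) (f \o flip j) = Expect (proc t) f.
Proof.
move=> j_gt0; elim: t f => [|t IH] f /=; first by rewrite !Expect_dret /flip /= flipz_id.
by rewrite !Expect_dbind -[RHS]IH; apply: Expect_ext => x _; rewrite /= pstep_flip.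
Qed.

Lemma Expect_proc_mass1 t : Expect (proc t) (fun _ => 1) = 1.
Proof.
elim: t => [|t IH] /=; first by rewrite Expect_dret.
rewrite Expect_dbind -[RHS]IH; apply: Expect_ext => s _ /=.
rewrite /pstep Expect_dbind (Expect_ext (g := fun _ => 1)) => [|x _].
  apply: Expect_dfold_mass1 => v a.
  by rewrite /step_frontier !Expect_cons Expect_nil /=; field.
apply: Expect_dfold_mass1 => v a.
by rewrite /step_inner !Expect_cons Expect_nil /=; ring.
Qed.

Section Supported.
Hypotheses (alpha01 : 0 <= alpha <= 1) (beta01 : 0 <= beta <= 1).

Definition signs_drawn (o : V -> option nat) (s : pstate V) :=
  forall x i, o x = Some i -> (i < size (zs s))%N.

Let step_invariant (o : V -> option nat) (s : pstate V) :=
  signs_drawn (origin s) s /\ signs_drawn o s.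

Lemma signs_drawn_upd o v y s :
  signs_drawn o s -> (forall i, y = Some i -> (i < size (zs s))%N) ->
  signs_drawn (upd o v y) s.
Proof. by move=> os ys x i; rewrite /upd; case: eqP => _; [apply: ys | apply: os]. Qed.

Lemma signs_drawn_rcons o s o' b :
  signs_drawn o s -> signs_drawn o (PState o' (rcons (zs s) b)).
Proof. by move=> os x i /os; rewrite size_rcons; apply: ltnW. Qed.

Lemma step_frontier_supported o v s : step_invariant o s ->
  dsupported (step_invariant o) (step_frontier p alpha o v s).
Proof.
case/andP: alpha01 => alpha_ge0 alpha_le1 [ss os] y.
have alpha2_ge0 : 0 <= alpha / 2 by lra.
case=> [<-|[<-|[<-|[]]]]; split; rewrite ?subr_ge0 //; split => //=.
- by apply: signs_drawn_upd => // i /os.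
all: try exact: signs_drawn_rcons.
all: by apply: signs_drawn_upd => [|i [<-]]; [exact: signs_drawn_rcons | rewrite size_rcons].
Qed.

Lemma step_inner_supported o v s : step_invariant o s ->
  dsupported (step_invariant o) (step_inner p beta o v s).
Proof.
case/andP: beta01 => beta_ge0 beta_le1 [ss os] y.
case=> [<-|[<-|[]]]; split; rewrite ?subr_ge0 //; split => //=.
by apply: signs_drawn_upd => // i /os.
Qed.

Lemma proc_supported t : dsupported (fun s => signs_drawn (origin s) s) (proc t).
Proof.
elim: t => [|t IH] /=.
  by apply: dsupported_dret => x i /=; case: eqP => // _ [<-].
apply: dsupported_dbind IH _ => s ss; rewrite /pstep.
apply: (@dsupported_dbind _ _ _ (step_invariant (origin s))) => [|a sa].
  by apply: dsupported_dfold; [exact: step_frontier_supported | split].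
move=> y /(dsupported_dfold (@step_inner_supported _) sa) [y1_ge0 []] //.
Qed.

End Supported.
End Process.

Lemma maxn_odflt_Some (a b : option nat) j : (0 < j)%N ->
  maxn (odflt 0 a) (odflt 0 b) = j -> (a == Some j) || (b == Some j).
Proof.
case: a b => [a|] [b|] /= j_gt0 abj; rewrite ?max0n ?maxn0 in abj;
  rewrite -?abj ?eqxx ?orbT //; [|lia].
by case: (leqP a b) => ab; apply/orP; [right|left]; apply/eqP; congr Some; lia.
Qed.

Section Correlation.
Variables (R : realType) (V : eqType) (nb : V -> seq V) (r : V) (p : V -> V)
          (alpha beta : R).
Hypotheses (alpha01 : 0 <= alpha <= 1) (beta01 : 0 <= beta <= 1).

Local Notation proc := (proc nb r p alpha beta).

Definition gsign (s : pstate V) (x : V) : R :=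
  (gval s x == Some true)%:R - (gval s x == Some false)%:R.

Lemma gsign_None s x : origin s x = None -> gsign s x = 0.
Proof. by rewrite /gsign /gval => ->; rewrite subrr. Qed.

Lemma gsign_sqr_le1 s x : gsign s x ^+ 2 <= 1.
Proof.
by rewrite /gsign; case: (gval s x) => [[]|] /=;
  rewrite ?subr0 ?sub0r ?subrr ?sqrrN ?expr1n ?expr0n.
Qed.

Lemma gsign_flip j s x : signs_drawn (origin s) s ->
  gsign (flip j s) x = if origin s x == Some j then - gsign s x else gsign s x.
Proof.
move=> ss; rewrite /gsign /gval /=; case sx: (origin s x) => [i|] //=.
rewrite nth_flipz; case: (eqVneq i j) => [<-|ij] /=; last first.
  by rewrite (_ : (Some i == Some j) = false) //; apply/negbTE; apply: contra ij => /eqP [->].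
by rewrite eqxx (ss _ _ sx) /=; case: (nth true (zs s) i); rewrite /= ?subr0 ?sub0r ?opprK.
Qed.

Definition distinct_cross (u v : V) (s : pstate V) : R :=
  gsign s u * gsign s v * (origin s u != origin s v)%:R.

Definition max_origin (u v : V) (s : pstate V) : nat :=
  maxn (odflt 0 (origin s u)) (odflt 0 (origin s v)).

Lemma distinct_cross_max_origin0 u v s :
  max_origin u v s = 0%N -> distinct_cross u v s = 0.
Proof.
rewrite /max_origin /distinct_cross.
case su: (origin s u) => [a|]; last by rewrite gsign_None // !mul0r.
case sv: (origin s v) => [b|]; last by rewrite (gsign_None (x := v)) // mulr0 mul0r.
move=> /= ab0; have [a0 b0] : a = 0%N /\ b = 0%N by lia.
by rewrite a0 b0 eqxx mulr0.
Qed.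

(* When the two origins differ and the larger one is j, exactly one of u, v has origin j. *)
Lemma distinct_cross_flip j u v s : (0 < j)%N -> signs_drawn (origin s) s ->
  distinct_cross u v (flip j s) * (max_origin u v (flip j s) == j)%:R =
  - (distinct_cross u v s * (max_origin u v s == j)%:R).
Proof.
move=> j_gt0 ss; rewrite /distinct_cross /= !gsign_flip //.
have -> : max_origin u v (flip j s) = max_origin u v s by [].
have [mj|_] := eqVneq (max_origin u v s) j; last by rewrite !mulr0 oppr0.
case: (eqVneq (origin s u) (Some j)) => [uj|/negbTE nuj];
  case: (eqVneq (origin s v) (Some j)) => [vj|/negbTE nvj].
- by rewrite uj vj eqxx /= !(mulr0, mul0r) oppr0.
- by rewrite !mulNr.
- by rewrite mulrN !mulNr.
- by have := maxn_odflt_Some j_gt0 mj; rewrite nuj nvj.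
Qed.

Lemma Expect_distinct_cross u v t : Expect (proc t) (distinct_cross u v) = 0.
Proof.
have [M ->] := Expect_partition (proc t) (max_origin u v) (distinct_cross u v).
apply: big1 => -[j _] _ /=; case: (posnP j) => [->|j_gt0].
  rewrite (Expect_ext (g := fun _ => 0 * 0)) => [|x _]; first by rewrite ExpectZl mul0r.
  by case: eqP => [/distinct_cross_max_origin0 ->|_]; rewrite /= ?mul0r ?mulr0.
apply: (Expect_odd (F := flip j)); first exact: Expect_proc_flip.
by move=> x /(proc_supported alpha01 beta01) [_ sx]; exact: distinct_cross_flip.
Qed.

Lemma Expect_gsign_mul_le u v t :
  Expect (proc t) (fun s => gsign s u * gsign s v) <=
  Expect (proc t) (fun s => (origin s u == origin s v)%:R).
Proof.
have -> : Expect (proc t) (fun s => gsign s u * gsign s v) =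
    Expect (proc t) (fun s => gsign s u * gsign s v * (origin s u == origin s v)%:R)
    + Expect (proc t) (distinct_cross u v).
  rewrite /Expect -big_split /=; apply: eq_bigr => x _.
  by rewrite /distinct_cross; case: eqP => /=; rewrite ?mulr1 ?mulr0 ?addr0 ?add0r.
rewrite Expect_distinct_cross addr0; apply: (ler_Expect (proc_supported alpha01 beta01 (t := t))).
move=> s _; case: eqP => uv; last by rewrite !mulr0.
by rewrite mulr1 /gsign /gval uv -expr2 gsign_sqr_le1.
Qed.

Local Notation ball t := (gball nb r t).
Local Notation pairs t := [seq (x, y) | x <- ball t, y <- ball t].

Lemma lambda_of_sqr t s : lambda_of R nb r t s ^+ 2 =
  (size (ball t))%:R ^- 2 * \sum_(uv <- pairs t) gsign s uv.1 * gsign s uv.2.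
Proof.
rewrite /lambda_of !natr_count -sumrB expr_div_n big_allpairs /= mulrC; congr (_ * _).
by rewrite expr2 mulr_suml; apply: eq_bigr => x _; rewrite mulr_sumr.
Qed.

Lemma Expect_lambda_sqr_le t :
  Expect (proc t) (fun s => lambda_of R nb r t s ^+ 2) <= p_coinc nb r p alpha beta t.
Proof.
have -> : Expect (proc t) (fun s => lambda_of R nb r t s ^+ 2) = (size (ball t))%:R ^- 2 *
    \sum_(uv <- pairs t) Expect (proc t) (fun s => gsign s uv.1 * gsign s uv.2).
  by rewrite -Expect_sum -ExpectZl; apply: Expect_ext => x _; rewrite lambda_of_sqr.
have -> : p_coinc nb r p alpha beta t = (size (ball t))%:R ^- 2 *
    \sum_(uv <- pairs t) Expect (proc t) (fun s => (origin s uv.1 == origin s uv.2)%:R).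
  by rewrite -Expect_sum -ExpectZl; apply: Expect_ext => x _; rewrite /coinc_of natr_count mulrC.
rewrite ler_wpM2l ?invr_ge0 ?exprn_ge0 //; apply: ler_sum => uv _.
exact: Expect_gsign_mul_le.
Qed.

Lemma dev_prob_le t eta : 0 < eta ->
  dev_prob nb r p alpha beta t eta <= p_coinc nb r p alpha beta t / eta ^+ 2.
Proof.
move=> eta_gt0; apply: le_trans (chebyshev_Prob _ (proc_supported alpha01 beta01 (t := t))
  (Expect_proc_mass1 _ _ _ _ _ t) eta_gt0) _.
by rewrite ler_pM2r ?invr_gt0 ?exprn_gt0 // Expect_lambda_sqr_le.
Qed.

End Correlation.

Theorem mainTheorem14 (R : realType) (V : eqType) (nb : V -> seq V) (r : V)
    (p : V -> V) (alpha beta : R) :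
  0 < alpha < 1 -> 0 < beta < 1 ->
  (forall x y : V, (y \in nb x) = (x \in nb y)) ->
  (forall x : V, x \notin nb x) ->
  (forall x : V, exists t, x \in gball nb r t) ->
  is_bfs_parent nb r p ->
  ((p_coinc nb r p alpha beta @ \oo --> 0%R) ->
     forall eta : R, 0 < eta ->
       exists t0 : nat, forall t : nat, (t0 <= t)%N ->
         dev_prob nb r p alpha beta t eta < eta)
  /\
  (forall c1 c2 : R, 0 < c1 -> 0 < c2 ->
     (forall t : nat, p_coinc nb r p alpha beta t <= expR (- (c1 * t%:R `^ c2))) ->
     exists c3 c4 c5 c6 : R, [/\ 0 < c3, 0 < c4, 0 < c5 & 0 < c6] /\
       exists t1 : nat, forall t : nat, (t1 <= t)%N ->
         dev_prob nb r p alpha beta t (expR (- (c3 * t%:R `^ c4)))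
           <= expR (- (c5 * t%:R `^ c6))).
Proof.
move=> /andP [alpha_gt0 alpha_lt1] /andP [beta_gt0 beta_lt1] _ _ _ _.
have alpha01 : 0 <= alpha <= 1 by rewrite !ltW.
have beta01 : 0 <= beta <= 1 by rewrite !ltW.
split=> [p_cvg0 eta eta_gt0 | c1 c2 c1_gt0 c2_gt0 p_le].
  have eta3_gt0 : 0 < eta ^+ 3 by rewrite exprn_gt0.
  move/cvgr_dist_lt: p_cvg0 => /(_ _ eta3_gt0) [t0 _ p_small].
  exists t0 => t t0t; apply: le_lt_trans (dev_prob_le nb r p alpha01 beta01 t eta_gt0) _.
  rewrite ltr_pdivrMr ?exprn_gt0 // -exprS.
  by have := p_small t t0t; rewrite sub0r normrN; apply: le_lt_trans (ler_norm _).
(* Chebyshev at eta = exp(-c1 t^c2 / 4) gives the bound exp(-c1 t^c2 / 2). *)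
exists (c1 / 4), c2, (c1 / 2), c2; split; first by split; rewrite ?divr_gt0.
exists 0%N => t _.
apply: le_trans (dev_prob_le nb r p alpha01 beta01 t (expR_gt0 _)) _.
rewrite ler_pdivrMr ?exprn_gt0 ?expR_gt0 //; apply: le_trans (p_le t) _.
rewrite expr2 -!expRD ler_expR.
have : 0 <= t%:R `^ c2 by apply: powR_ge0.
lra.
Qed.
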